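(* Let $n\ge1$, $\rho\in(0,1)$, $\alpha\ge0$, and let $F:\mathbb{R}^n\to\mathbb{R}^n$ be $\rho$-Lipschitz with $F(x)=Gx+\xi(x)$, where $G\in\mathbb{R}^{n\times n}$ is symmetric positive semidefinite with $G\preccurlyeq\rho I$ and $\xi:\mathbb{R}^n\to\mathbb{R}^n$ is $\alpha$-Lipschitz. Let $C\ge1$, $k>2$ an integer, $x_0\in\mathbb{R}^n$, and let $x_e$ be the output of Constrained Anderson Acceleration started at $x_0$ with parameters $C,k$. Then $\|F(x_e)-x_e\|\le\hat\rho(C)\|F(x_0)-x_0\|$, where $\hat\rho(C)=\tilde\rho(C)+3\alpha kC$. Moreover, for every positive integer $M$, $$\hat\rho(C)\le\max_{i\in\{-1,\dots,M\}}\max\Big(\frac{C-C_i}{C_{i+1}-C_i}\rho_{i+1}+\frac{C_{i+1}-C}{C_{i+1}-C_i}\rho_i,\ \rho_*\Big)+3\alpha kC.$$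
   Context: $\|\cdot\|$ is the Euclidean norm; $\mathbb{R}_k[X]$ is real polynomials of degree at most $k$; $\|p\|_1$ is the sum of absolute values of coefficients of $p$, and $\|c\|_1=\sum_i|c_i|$. Constrained Anderson Acceleration: set $x_{i+1}=F(x_i)$ for $i=0,\dots,k$; $R=[x_0-x_1,\dots,x_k-x_{k+1}]$; $\tilde c\in\arg\min\{\|Rc\|:\mathbf 1^Tc=1,\ \|c\|_1\le C\}$; output $x_e=\sum_{i=0}^k\tilde c_ix_i$. $\tilde\rho(C)=\min\{\max_{x\in[0,\rho]}|p(x)|:p\in\mathbb{R}_k[X],\ p(1)=1,\ \|p\|_1\le C\}$. $T_k$ is the first-kind Chebyshev polynomial of degree $k$; for $\varepsilon\ge0$, $p_\varepsilon(X)=T_k\big(2\frac{X+\varepsilon}{\rho+\varepsilon}-1\big)/\big|T_k\big(2\frac{1+\varepsilon}{\rho+\varepsilon}-1\big)\big|$; $C_*=\|p_0\|_1$; $\rho_*=\frac{2\beta^k}{1+\beta^{2k}}$ with $\beta=\frac{1-\sqrt{1-\rho}}{1+\sqrt{1-\rho}}$. Given $M$: $\varepsilon_i=\rho/2^{i-1}$, $C_i=\|p_{\varepsilon_i}\|_1$ and $\rho_i=\frac{2\beta_i^k}{1+\beta_i^{2k}}$ with $\beta_i=\frac{1-\sqrt{1-\frac{\rho+\varepsilon_i}{1+\varepsilon_i}}}{1+\sqrt{1-\frac{\rho+\varepsilon_i}{1+\varepsilon_i}}}$ for $i=1,\dots,M$; $C_{-1}=1$, $\rho_{-1}=\rho^k$;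 $C_0=\frac{2+\rho^k}{2-\rho^k}$, $\rho_0=\frac{\rho^k}{2-\rho^k}$; $C_{M+1}=C_*$, $\rho_{M+1}=\rho_*$. *)

From HB Require Import structures.
From mathcomp Require Import all_boot all_order all_algebra.
From mathcomp Require Import boolp classical_sets reals.
Set Implicit Arguments. Unset Strict Implicit. Unset Printing Implicit Defensive.
Import Order.TTheory GRing.Theory Num.Theory.
Local Open Scope ring_scope.
Local Open Scope classical_set_scope.

Section Defs.
Variable R : realType.

Definition enorm (n : nat) (v : 'cV[R]_n) : R := Num.sqrt (\sum_(i < n) v i 0 ^+ 2).

Definition lipschitz (n : nat) (L : R) (f : 'cV[R]_n -> 'cV[R]_n) : Prop :=
  forall x y, enorm (f x - f y) <= L * enorm (x - y).

Definition qform (n : nat) (A : 'M[R]_n) (v : 'cV[R]_n) : R := ((v^T *m A *m v) 0 0).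

Definition symmetric_mx (n : nat) (A : 'M[R]_n) : Prop := A^T = A.
Definition psd (n : nat) (A : 'M[R]_n) : Prop := forall v, 0 <= qform A v.
Definition loewner_le (n : nat) (A B : 'M[R]_n) : Prop := psd (B - A).

Definition caa_iter (n : nat) (F : 'cV[R]_n -> 'cV[R]_n) (x0 : 'cV[R]_n) (i : nat) :=
  iter i F x0.

Definition caa_resmx (n k : nat) (F : 'cV[R]_n -> 'cV[R]_n) (x0 : 'cV[R]_n)
  : 'M[R]_(n, k.+1) :=
  \matrix_(r < n, j < k.+1) (caa_iter F x0 j - caa_iter F x0 j.+1) r 0.

Definition l1vec (m : nat) (c : 'cV[R]_m) : R := \sum_(i < m) `|c i 0|.

Definition caa_feasible (k : nat) (C : R) (c : 'cV[R]_k.+1) : Prop :=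
  \sum_(i < k.+1) c i 0 = 1 /\ l1vec c <= C.

Definition caa_argmin (n k : nat) (F : 'cV[R]_n -> 'cV[R]_n) (x0 : 'cV[R]_n)
  (C : R) (c : 'cV[R]_k.+1) : Prop :=
  caa_feasible C c /\
  forall c', caa_feasible C c' ->
    enorm (caa_resmx k F x0 *m c) <= enorm (caa_resmx k F x0 *m c').

Definition caa_output (n k : nat) (F : 'cV[R]_n -> 'cV[R]_n) (x0 : 'cV[R]_n)
  (c : 'cV[R]_k.+1) : 'cV[R]_n :=
  \sum_(i < k.+1) c i 0 *: caa_iter F x0 i.

Definition l1poly (p : {poly R}) : R := \sum_(i < size p) `|p`_i|.

(* max_{x in [0,rho]} |p(x)| (attained, hence the supremum) *)
Definition supnorm_on (rho : R) (p : {poly R}) : R :=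
  sup [set y | exists x : R, 0 <= x <= rho /\ y = `|p.[x]|].

Definition rho_tilde (rho : R) (k : nat) (C : R) : R :=
  inf [set y | exists p : {poly R},
          [/\ (size p <= k.+1)%N, p.[1] = 1, l1poly p <= C & y = supnorm_on rho p]].

(* Chebyshev polynomials of the first kind: T_0 = 1, T_1 = X,
   T_{m+2} = 2 X T_{m+1} - T_m *)
Fixpoint cheb_pair (m : nat) : {poly R} * {poly R} :=
  match m with
  | 0 => (1, 'X)
  | m'.+1 => let: (a, b) := cheb_pair m' in (b, 'X * b *+ 2 - a)
  end.
Definition cheb (m : nat) : {poly R} := (cheb_pair m).1.

Definition p_eps (rho : R) (k : nat) (eps : R) : {poly R} :=
  (`|(cheb k).[2 * (1 + eps) / (rho + eps) - 1]|)^-1 *: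
    (cheb k \Po ((2 / (rho + eps)) *: ('X + eps%:P) - 1)).

Definition beta_of (r : R) : R := (1 - Num.sqrt (1 - r)) / (1 + Num.sqrt (1 - r)).
Definition rate_of (k : nat) (b : R) : R := 2 * b ^+ k / (1 + b ^+ (2 * k)).

Definition C_star (rho : R) (k : nat) : R := l1poly (p_eps rho k 0).
Definition rho_star (rho : R) (k : nat) : R := rate_of k (beta_of rho).

Definition eps_i (rho : R) (i : nat) : R := rho / 2 ^+ i.-1.

(* Shifted indexing: Cs rho k M j = C_{j-1}, for j = 0, ..., M+2
   (i.e. C_{-1}, C_0, C_1, ..., C_M, C_{M+1}). Same for rhos. *)
Definition Cs (rho : R) (k M j : nat) : R :=
  if j == 0%N then 1
  else if j == 1%N then (2 + rho ^+ k) / (2 - rho ^+ k)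
  else if (j <= M.+1)%N then l1poly (p_eps rho k (eps_i rho j.-1))
  else C_star rho k.

Definition rhos (rho : R) (k M j : nat) : R :=
  if j == 0%N then rho ^+ k
  else if j == 1%N then rho ^+ k / (2 - rho ^+ k)
  else if (j <= M.+1)%N then
    rate_of k (beta_of ((rho + eps_i rho j.-1) / (1 + eps_i rho j.-1)))
  else rho_star rho k.

(* the affine piece indexed by i = j-1 in {-1,...,M}, evaluated at C *)
Definition interp (rho : R) (k M j : nat) (C : R) : R :=
  (C - Cs rho k M j) / (Cs rho k M j.+1 - Cs rho k M j) * rhos rho k M j.+1
  + (Cs rho k M j.+1 - C) / (Cs rho k M j.+1 - Cs rho k M j) * rhos rho k M j.

(* max_{i in {-1..M}} max(interp_i(C), rho_star); folding with rho_star as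
   initial value does not change the max since every term is >= rho_star. *)
Definition interp_bound (rho : R) (k M : nat) (C : R) : R :=
  \big[Num.max/rho_star rho k]_(j < M.+2) Num.max (interp rho k M j C) (rho_star rho k).

End Defs.

(* Write r_i = x_i - x_{i+1} for the residuals of the plain iteration. Since
   F = G + xi with xi alpha-Lipschitz, r_i = G^i r_0 + e_i with
   |e_i| <= i alpha |r_0|. For a polynomial p admissible in rho_tilde(C) its
   coefficient vector is a feasible point of the CAA problem, with residual
   p(G) r_0 + sum_i p_i e_i; the spectral theorem bounds |p(G) r_0| by
   max_[0,rho] |p| |r_0|, and minimality transfers the bound to the optimal c.
   The residual of x_e differs from -R c by xi-terms of size 2 alpha k C |r_0|.
   For the interpolation bound, the pairs (C, r) realised by admissible
   polynomials form a convex set containing every node (C_i, rho_i): X^k, the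
   rescaling of 2 X^k - rho^k, and the shifted Chebyshev polynomials p_eps,
   whose sup on [0, rho] is 1 / T_k(2 (1 + eps) / (rho + eps) - 1). *)

From HB Require Import structures.
From mathcomp Require Import all_boot all_order all_algebra.
From mathcomp Require Import boolp classical_sets reals complex.
From mathcomp Require Import ring lra zify.
Set Implicit Arguments. Unset Strict Implicit. Unset Printing Implicit Defensive.
Import Order.TTheory GRing.Theory Num.Theory.
Local Open Scope ring_scope.
Local Open Scope classical_set_scope.

Section EuclideanNorm.
Variables (R : realType) (n : nat).
Implicit Types (u v : 'cV[R]_n) (a : R).

Lemma sqr_enorm v : enorm v ^+ 2 = \sum_(i < n) v i 0 ^+ 2.
Proof. by rewrite sqr_sqrtr // sumr_ge0 // => i _; rewrite sqr_ge0. Qed.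

Lemma enorm_ge0 v : 0 <= enorm v.
Proof. exact: sqrtr_ge0. Qed.

Lemma enorm_dot v : (v^T *m v) 0 0 = enorm v ^+ 2.
Proof. by rewrite sqr_enorm mxE; apply: eq_bigr => i _; rewrite !mxE expr2. Qed.

Lemma enorm_le_sqr v a : 0 <= a -> enorm v ^+ 2 <= a ^+ 2 -> enorm v <= a.
Proof. by move=> a0; rewrite ler_pXn2r // nnegrE enorm_ge0. Qed.

Lemma enormZ a v : enorm (a *: v) = `|a| * enorm v.
Proof.
apply/eqP; rewrite -(eqrXn2 (n := 2)) ?mulr_ge0 ?enorm_ge0 //.
rewrite exprMn real_normK ?num_real // !sqr_enorm mulr_sumr.
by apply/eqP/eq_bigr => i _; rewrite mxE exprMn.
Qed.

Lemma enormN v : enorm (- v) = enorm v.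
Proof. by rewrite -scaleN1r enormZ normrN1 mul1r. Qed.

Lemma enormB u v : enorm (u - v) = enorm (v - u).
Proof. by rewrite -enormN opprB. Qed.

Lemma enorm0 : enorm (0 : 'cV[R]_n) = 0.
Proof. by rewrite -(scale0r 0) enormZ normr0 mul0r. Qed.

Let dot u v := \sum_(i < n) u i 0 * v i 0.

Let lagrange_identity u v : 2 * ((enorm u * enorm v) ^+ 2 - dot u v ^+ 2) =
  \sum_(i < n) \sum_(j < n) (u i 0 * v j 0 - u j 0 * v i 0) ^+ 2.
Proof.
have uv : (enorm u * enorm v) ^+ 2 = \sum_(i < n) \sum_(j < n) u i 0 ^+ 2 * v j 0 ^+ 2.
  by rewrite exprMn !sqr_enorm mulr_suml; apply: eq_bigr => i _; rewrite mulr_sumr.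
have vu : (enorm u * enorm v) ^+ 2 = \sum_(i < n) \sum_(j < n) u j 0 ^+ 2 * v i 0 ^+ 2.
  rewrite exprMn !sqr_enorm mulrC mulr_suml; apply: eq_bigr => i _; rewrite mulr_sumr.
  by apply: eq_bigr => j _; rewrite mulrC.
have dd : dot u v ^+ 2 = \sum_(i < n) \sum_(j < n) (u i 0 * v i 0) * (u j 0 * v j 0).
  by rewrite expr2 mulr_suml; apply: eq_bigr => i _; rewrite mulr_sumr.
rewrite mulr2n mulrDl mul1r {1}uv vu dd -!sumrB -big_split /=.
apply: eq_bigr => i _; rewrite -!sumrB -big_split /=.
by apply: eq_bigr => j _; ring.
Qed.

Lemma cauchy_schwarz u v : dot u v <= enorm u * enorm v.
Proof.
apply: le_trans (ler_norm _) _; rewrite -ler_sqr ?nnegrE ?mulr_ge0 ?enorm_ge0 //.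
rewrite real_normK ?num_real // -subr_ge0 -(pmulr_rge0 _ (ltr0Sn _ 1)).
by rewrite lagrange_identity; do 2![apply: sumr_ge0 => ? _]; rewrite sqr_ge0.
Qed.

Lemma enormD u v : enorm (u + v) <= enorm u + enorm v.
Proof.
apply: enorm_le_sqr; first by rewrite addr_ge0 ?enorm_ge0.
have -> : enorm (u + v) ^+ 2 = enorm u ^+ 2 + 2 * dot u v + enorm v ^+ 2.
  rewrite !sqr_enorm /dot mulr_sumr -!big_split /=.
  by apply: eq_bigr => i _; rewrite mxE; ring.
have := cauchy_schwarz u v; rewrite sqrrD; lra.
Qed.

Lemma enorm_sum (I : Type) (r : seq I) (P : pred I) (f : I -> 'cV[R]_n) :
  enorm (\sum_(i <- r | P i) f i) <= \sum_(i <- r | P i) enorm (f i).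
Proof.
elim/big_rec2: _ => [|i y1 y2 _ IH]; first by rewrite enorm0.
by apply: le_trans (enormD _ _) _; rewrite lerD2l.
Qed.

Lemma enorm_combination_le m (c : 'cV[R]_m) (f : 'I_m -> 'cV[R]_n) b :
  (forall j, enorm (f j) <= b) -> enorm (\sum_(j < m) c j 0 *: f j) <= l1vec c * b.
Proof.
move=> fb; apply: le_trans (enorm_sum _ _ _) _; rewrite /l1vec mulr_suml.
by apply: ler_sum => j _; rewrite enormZ ler_wpM2l.
Qed.
End EuclideanNorm.

Section HermitianCalculus.
Variable C : numClosedFieldType.
Local Open Scope sesquilinear_scope.

Definition csqnorm (n : nat) (z : 'cV[C]_n) : C := \sum_(i < n) `|z i 0| ^+ 2.

Lemma csqnormE n (z : 'cV[C]_n) : csqnorm z = (z^t* *m z) 0 0.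
Proof. by rewrite mxE; apply: eq_bigr => i _; rewrite !mxE normCK mulrC. Qed.

Lemma csqnorm_unitary n (U : 'M[C]_n) z : U \is unitarymx -> csqnorm (U *m z) = csqnorm z.
Proof.
rewrite -trmxC_unitary => /unitarymxP UU.
by rewrite !csqnormE trmx_mul map_mxM mulmxA -(mulmxA _ _ U) -{2}(trmxCK U) UU mulmx1.
Qed.

Lemma csqnorm_diag n (d : 'rV[C]_n) z m : 0 <= m -> (forall j, `|d 0 j| <= m) ->
  csqnorm (diag_mx d *m z) <= m ^+ 2 * csqnorm z.
Proof.
move=> m0 dm; rewrite /csqnorm mulr_sumr; apply: ler_sum => j _.
rewrite mul_diag_mx mxE normrM exprMn ler_wpM2r ?exprn_ge0 //.
by rewrite lerXn2r ?nnegrE.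
Qed.

Lemma hermitian_horner_mx_bound n (A : 'M[C]_n.+1) p (m : C) z : A \is hermsymmx -> 0 <= m ->
  (forall j, `|p.[spectral_diag A 0 j]| <= m) ->
  csqnorm (horner_mx A p *m z) <= m ^+ 2 * csqnorm z.
Proof.
move=> /hermitian_normalmx/orthomx_spectralP AE m0 pm; rewrite [in horner_mx A]AE.
have Pu := spectral_unitarymx A; have Pi := unitarymx_unit Pu.
rewrite horner_mx_uconjC // horner_mx_diag -!mulmxA invmx_unitary //.
rewrite csqnorm_unitary ?trmxC_unitary //.
rewrite -[X in _ <= _ * X](csqnorm_unitary z Pu).
by apply: csqnorm_diag => // j; rewrite mxE.
Qed.

End HermitianCalculus.

Section RealSymmetric.
Variable R : realType.
Local Open Scope sesquilinear_scope.
Local Notation toC := (real_complex R).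
Local Notation Re := (@complex.Re R).
Local Notation Im := (@complex.Im R).

Lemma Re_mulmx_real m n p (z : 'M[R[i]]_(m, n)) (A : 'M[R]_(n, p)) :
  map_mx Re (z *m map_mx toC A) = map_mx Re z *m A.
Proof.
apply/matrixP => i j; rewrite !mxE raddf_sum; apply: eq_bigr => k _.
by rewrite !mxE; case: (z i k) => a b /=; rewrite mulr0 subr0.
Qed.

Lemma Im_mulmx_real m n p (z : 'M[R[i]]_(m, n)) (A : 'M[R]_(n, p)) :
  map_mx Im (z *m map_mx toC A) = map_mx Im z *m A.
Proof.
apply/matrixP => i j; rewrite !mxE raddf_sum; apply: eq_bigr => k _.
by rewrite !mxE; case: (z i k) => a b /=; rewrite mulr0 add0r.
Qed.

Lemma csqnorm_Re_Im n (z : 'cV[R[i]]_n) :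
  csqnorm z = toC (enorm (map_mx Re z) ^+ 2 + enorm (map_mx Im z) ^+ 2).
Proof.
rewrite !sqr_enorm -big_split rmorph_sum; apply: eq_bigr => i _.
by rewrite !mxE -add_Re2_Im2.
Qed.

Lemma csqnorm_real n (v : 'cV[R]_n) : csqnorm (map_mx toC v) = toC (enorm v ^+ 2).
Proof.
rewrite csqnorm_Re_Im; congr toC; rewrite -[RHS]addr0; congr (_ + _).
  by congr (enorm _ ^+ 2); apply/matrixP => i j; rewrite !mxE.
by rewrite sqr_enorm big1 // => i _; rewrite !mxE expr0n.
Qed.

Lemma qform_left_eigen n (A : 'M[R]_n) (a : 'rV[R]_n) t :
  a *m A = t *: a -> qform A a^T = t * enorm a^T ^+ 2.
Proof. by move=> aA; rewrite /qform trmxK aA -scalemxAl mxE -enorm_dot trmxK. Qed.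

Lemma psd_left_eigen_bounds n (G : 'M[R]_n) rho (a : 'rV[R]_n) t :
  psd G -> loewner_le G rho%:M -> a *m G = t *: a ->
  0 <= t * enorm a^T ^+ 2 <= rho * enorm a^T ^+ 2.
Proof.
move=> Gpsd Grho aG.
have aGr : a *m (rho%:M - G) = (rho - t) *: a by rewrite mulmxBr aG mul_mx_scalar scalerBl.
have := Gpsd a^T; have := Grho a^T.
by rewrite (qform_left_eigen aG) (qform_left_eigen aGr) mulrBl subr_ge0 => -> ->.
Qed.

Lemma normC_real (x : R) : `|toC x| = toC `|x|.
Proof. by rewrite normc_def /= expr0n addr0 sqrtr_sqr. Qed.

Lemma symmetric_realC_hermitian n (G : 'M[R]_n) :
  symmetric_mx G -> map_mx toC G \is hermsymmx.
Proof.
move=> Gsym; apply: realsym_hermsym; last by apply/mxOverP => i k; rewrite mxE complex_real.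
apply/is_hermitianmxP; apply/matrixP => i k.
by rewrite !mxE expr0 mul1r -{1}Gsym mxE.
Qed.

Lemma symmetric_spectral_diag_range n (G : 'M[R]_n) rho (j : 'I_n) :
  symmetric_mx G -> psd G -> loewner_le G rho%:M ->
  exists2 t, spectral_diag (map_mx toC G) 0 j = toC t & 0 <= t <= rho.
Proof.
move=> Gsym Gpsd Grho; set Gc := map_mx toC G.
have Gherm : Gc \is hermsymmx := symmetric_realC_hermitian Gsym.
have [t dt] := complex_realP _ (mxOverP (hermitian_spectral_diag_real Gherm) 0 j).
exists t => //; set P := spectralmx Gc; set w := row j P.
have Pu : P \is unitarymx := spectral_unitarymx Gc.
have w_eigen : w *m Gc = toC t *: w.
  have /orthomx_spectralP GE := hermitian_normalmx Gherm.
  rewrite /w -row_mul {1}GE !mulmxA mulmxV ?unitarymx_unit // mul1mx -dt.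
  by rewrite mul_diag_mx; apply/rowP => k; rewrite !mxE.
have w_unit : enorm (map_mx Re w)^T ^+ 2 + enorm (map_mx Im w)^T ^+ 2 = 1.
  apply: complexI; rewrite !map_trmx -csqnorm_Re_Im rmorph1.
  have /row_unitarymxP /(_ j j) := Pu; rewrite eqxx dotmxE mxE /=; apply: etrans.
  by apply: eq_bigr => k _; rewrite !mxE normCK.
have ReZ (z : R[i]) : Re (toC t * z) = t * Re z by case: z => a b /=; rewrite mul0r subr0.
have ImZ (z : R[i]) : Im (toC t * z) = t * Im z by case: z => a b /=; rewrite mul0r addr0.
have ReG : map_mx Re w *m G = t *: map_mx Re w.
  by rewrite -Re_mulmx_real w_eigen; apply/rowP => k; rewrite !mxE ReZ.
have ImG : map_mx Im w *m G = t *: map_mx Im w.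
  by rewrite -Im_mulmx_real w_eigen; apply/rowP => k; rewrite !mxE ImZ.
have /andP[a0 a1] := psd_left_eigen_bounds Gpsd Grho ReG.
have /andP[b0 b1] := psd_left_eigen_bounds Gpsd Grho ImG.
rewrite -[t]mulr1 -[rho]mulr1 -w_unit !mulrDr.
by apply/andP; split; [exact: addr_ge0|exact: lerD].
Qed.

Lemma enorm_horner_mx_le n (G : 'M[R]_n.+1) rho (p : {poly R}) m v :
  symmetric_mx G -> psd G -> loewner_le G rho%:M -> 0 <= m ->
  (forall x, 0 <= x <= rho -> `|p.[x]| <= m) ->
  enorm (horner_mx G p *m v) <= m * enorm v.
Proof.
move=> Gsym Gpsd Grho m0 pm; apply: enorm_le_sqr; first by rewrite mulr_ge0 ?enorm_ge0.
rewrite exprMn -lecR -csqnorm_real rmorphM rmorphXn /= -csqnorm_real.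
rewrite map_mxM map_horner_mx.
apply: hermitian_horner_mx_bound; [exact: symmetric_realC_hermitian|by rewrite ler0c|].
move=> j; have [t -> /pm tm] := symmetric_spectral_diag_range j Gsym Gpsd Grho.
by rewrite horner_map normC_real lecR.
Qed.

End RealSymmetric.

Lemma sum_coef_widen (R : nzSemiRingType) (V : nmodType) (p : {poly R}) N
    (f : nat -> R -> V) :
  (size p <= N)%N -> (forall i, f i 0 = 0) ->
  \sum_(i < N) f i p`_i = \sum_(i < size p) f i p`_i.
Proof.
move=> pN f0; rewrite [RHS](big_ord_widen N (fun i => f i p`_i) pN) [RHS]big_mkcond.
by apply: eq_bigr => i _; case: ltnP => // /(nth_default 0) ->.
Qed.

Lemma horner_mx_wide (R : comNzRingType) n (A : 'M[R]_n.+1) (p : {poly R}) N :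
  (size p <= N)%N -> horner_mx A p = \sum_(i < N) p`_i *: A ^+ i.
Proof.
move=> pN; rewrite (sum_coef_widen (f := fun i a => a *: A ^+ i) pN) => [|i]; last exact: scale0r.
rewrite -{1}[p]coefK poly_def rmorph_sum; apply: eq_bigr => i _.
by rewrite -mul_polyC rmorphM rmorphXn /= horner_mx_C horner_mx_X -mul_scalar_mx.
Qed.

Section PolyNorms.
Variable R : realType.
Implicit Types (p q : {poly R}) (a x rho : R).

Lemma l1poly_wide p N : (size p <= N)%N -> l1poly p = \sum_(i < N) `|p`_i|.
Proof.
by move=> pN; rewrite (sum_coef_widen (f := fun _ a => `|a|) pN) => // i; rewrite normr0.
Qed.

Lemma l1polyD p q : l1poly (p + q) <= l1poly p + l1poly q.
Proof.
set N := maxn (size p) (size q).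
rewrite !(@l1poly_wide _ N) ?leq_maxl ?leq_maxr ?size_polyD // -big_split.
by apply: ler_sum => i _; rewrite coefD ler_normD.
Qed.

Lemma l1polyZ a p : l1poly (a *: p) = `|a| * l1poly p.
Proof.
rewrite (@l1poly_wide _ (size p)) ?size_scale_leq // mulr_sumr.
by apply: eq_bigr => i _; rewrite coefZ normrM.
Qed.

Lemma l1polyC a : l1poly a%:P = `|a|.
Proof. by rewrite (@l1poly_wide _ 1) ?size_polyC ?leq_b1 // big_ord1 coefC. Qed.

Lemma l1polyXn k : l1poly ('X^k : {poly R}) = 1.
Proof.
rewrite /l1poly size_polyXn big_ord_recr /= big1 ?add0r ?coefXn ?eqxx ?normr1 //.
by move=> i _; rewrite coefXn (ltn_eqF (ltn_ord i)) normr0.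
Qed.

Lemma horner_le_l1poly p x : `|x| <= 1 -> `|p.[x]| <= l1poly p.
Proof.
move=> x1; rewrite horner_coef; apply: le_trans (ler_norm_sum _ _ _) _.
apply: ler_sum => i _; rewrite normrM normrX ler_piMr //.
exact: exprn_ile1.
Qed.

Section Supnorm.
Variable rho : R.
Hypotheses (rho0 : 0 <= rho) (rho1 : rho <= 1).

Let sup_set_nonempty p : [set y | exists x, 0 <= x <= rho /\ y = `|p.[x]|] !=set0.
Proof. by exists `|p.[0]|, 0; rewrite lexx rho0. Qed.

Lemma supnorm_on_ub p x : 0 <= x <= rho -> `|p.[x]| <= supnorm_on rho p.
Proof.
move=> x0rho; apply: sup_upper_bound; last by exists x.
split; first exact: sup_set_nonempty.
exists (l1poly p) => _ [y [/andP[y0 yrho] ->]].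
by apply: horner_le_l1poly; rewrite ger0_norm // (le_trans yrho).
Qed.

Lemma supnorm_on_ge0 p : 0 <= supnorm_on rho p.
Proof. by apply: le_trans (supnorm_on_ub p (x := 0) _); rewrite ?lexx. Qed.

Lemma supnorm_on_le p b :
  (forall x, 0 <= x <= rho -> `|p.[x]| <= b) -> supnorm_on rho p <= b.
Proof. by move=> pb; apply: ge_sup (sup_set_nonempty p) _ => _ [x [/pb + ->]]. Qed.

End Supnorm.


End PolyNorms.


Lemma affine_combination_sub (R : pzRingType) (V : lmodType R) m (c : 'cV[R]_m)
    (f : 'I_m -> V) v :
  \sum_(j < m) c j 0 = 1 ->
  \sum_(j < m) c j 0 *: (f j - v) = \sum_(j < m) c j 0 *: f j - v.
Proof.
by move=> c1; rewrite (eq_bigr _ (fun j _ => scalerBr _ _ _)) sumrB -scaler_suml c1 scale1r.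
Qed.

Lemma le_inf_affine (R : realType) (E : set R) (L a d : R) : E !=set0 -> 0 <= d ->
  (forall y, E y -> L <= (y + a) * d) -> L <= (inf E + a) * d.
Proof.
move=> [y Ey]; rewrite le_eqVlt => /orP[/eqP <- /(_ y Ey)|d0 EL].
  by rewrite !mulr0.
rewrite -ler_pdivrMr // -lerBlDr; apply: lb_le_inf; first by exists y.
by move=> z /EL; rewrite -ler_pdivrMr // lerBlDr.
Qed.
Section AndersonAcceleration.
Variables (R : realType) (n k : nat) (rho alpha : R).
Variables (F xi : 'cV[R]_n.+1 -> 'cV[R]_n.+1) (G : 'M[R]_n.+1) (x0 : 'cV[R]_n.+1).
Hypotheses (rho0 : 0 <= rho) (rho1 : rho <= 1) (alpha0 : 0 <= alpha).
Hypotheses (FL : lipschitz rho F) (xiL : lipschitz alpha xi).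
Hypothesis FG : forall x, F x = G *m x + xi x.
Hypotheses (Gsym : symmetric_mx G) (Gpsd : psd G) (Grho : loewner_le G rho%:M).

Local Notation x := (caa_iter F x0).
Local Notation r i := (x i - x i.+1).
Local Notation r0 := (enorm (r 0)).

Lemma enorm_residual_le i : enorm (r i) <= r0.
Proof.
elim: i => // i; apply: le_trans; apply: le_trans (FL _ _) _.
by rewrite ler_piMl ?enorm_ge0.
Qed.

Lemma enorm_iter_sub_le i : enorm (x i - x0) <= i%:R * r0.
Proof.
elim: i => [|i IH]; first by rewrite subrr enorm0 mul0r.
have -> : x i.+1 - x0 = (x i - x0) - r i by rewrite opprB [RHS]addrC addrA subrK.
apply: le_trans (enormD _ _) _; rewrite enormN mulrSr mulrDl mul1r.
exact: lerD IH (enorm_residual_le i).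
Qed.

Lemma enorm_mulmx_le v : enorm (G *m v) <= rho * enorm v.
Proof.
rewrite -[G in G *m v]horner_mx_X; apply: enorm_horner_mx_le => // y /andP[y0 yrho].
by rewrite hornerX ger0_norm.
Qed.

Lemma residual_succ i : r i.+1 = G *m r i + (xi (x i) - xi (x i.+1)).
Proof. by rewrite /= !FG mulmxBr addrACA opprD. Qed.

Lemma enorm_residual_linearization i :
  enorm (r i - G ^+ i *m r 0) <= i%:R * alpha * r0.
Proof.
elim: i => [|i IH]; first by rewrite expr0 mul1mx subrr enorm0 !mul0r.
rewrite residual_succ exprS -mulmxA addrAC -mulmxBr.
apply: le_trans (enormD _ _) _; rewrite mulrSr !mulrDl mul1r.
apply: lerD.
  by apply: le_trans (enorm_mulmx_le _) (le_trans _ IH); rewrite ler_piMl ?enorm_ge0.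
by apply: le_trans (xiL _ _) _; rewrite ler_wpM2l ?enorm_residual_le.
Qed.

Lemma enorm_iter_sub_le_k (j : 'I_k.+1) : enorm (x j - x0) <= k%:R * r0.
Proof.
by apply: le_trans (enorm_iter_sub_le j) _; rewrite ler_wpM2r ?enorm_ge0 // ler_nat -ltnS.
Qed.

Lemma caa_resmx_mul (c : 'cV[R]_k.+1) :
  caa_resmx k F x0 *m c = \sum_(j < k.+1) c j 0 *: r j.
Proof.
apply/matrixP => a b; rewrite !mxE summxE; apply: eq_bigr => j _.
by rewrite !mxE (ord1 b) mulrC.
Qed.

Lemma caa_output_residualE (c : 'cV[R]_k.+1) (xe := caa_output F x0 c) :
  \sum_(j < k.+1) c j 0 = 1 ->
  F xe - xe = - (caa_resmx k F x0 *m c) + (xi xe - xi x0)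
              - \sum_(j < k.+1) c j 0 *: (xi (x j) - xi x0).
Proof.
move=> c1; rewrite affine_combination_sub // caa_resmx_mul.
have -> : \sum_(j < k.+1) c j 0 *: r j = xe - (G *m xe + \sum_(j < k.+1) c j 0 *: xi (x j)).
  rewrite /xe /caa_output mulmx_sumr -big_split -sumrB /=; apply: eq_bigr => j _.
  by rewrite /= FG scalerBr scalerDr scalemxAr.
rewrite FG; move: (G *m xe) (xi xe) (xi x0) (\sum_(j < k.+1) _) => A B D S.
by apply/matrixP => a b; rewrite !mxE; ring.
Qed.

Lemma enorm_caa_residual_le C (c : 'cV[R]_k.+1) (xe := caa_output F x0 c) :
  caa_feasible C c ->
  enorm (F xe - xe) <= enorm (caa_resmx k F x0 *m c) + 2%:R * alpha * k%:R * C * r0.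
Proof.
move=> [c1 cC]; have kr0 : 0 <= k%:R * r0 by rewrite mulr_ge0 ?enorm_ge0.
have xe_x0 : enorm (xe - x0) <= C * (k%:R * r0).
  rewrite /xe /caa_output -(affine_combination_sub _ _ c1).
  apply: le_trans (enorm_combination_le _ enorm_iter_sub_le_k) _.
  by rewrite ler_wpM2r.
have xi_x : enorm (\sum_(j < k.+1) c j 0 *: (xi (x j) - xi x0)) <= C * (alpha * (k%:R * r0)).
  apply: le_trans (enorm_combination_le (b := alpha * (k%:R * r0)) _ _) _.
    by move=> j; apply: le_trans (xiL _ _) _; rewrite ler_wpM2l ?enorm_iter_sub_le_k.
  by rewrite ler_wpM2r // mulr_ge0.
have xi_xe : enorm (xi xe - xi x0) <= alpha * (C * (k%:R * r0)).
  by apply: le_trans (xiL _ _) _; rewrite ler_wpM2l.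
rewrite caa_output_residualE //; apply: le_trans (enormD _ _) _.
apply: le_trans (lerD (enormD _ _) (lexx _)) _.
rewrite !enormN -addrA lerD2l; have -> : 2%:R * alpha * k%:R * C * r0 =
  alpha * (C * (k%:R * r0)) + C * (alpha * (k%:R * r0)) by ring.
exact: lerD.
Qed.

Lemma enorm_resmx_argmin_le C (c : 'cV[R]_k.+1) (p : {poly R}) :
  caa_argmin F x0 C c -> (size p <= k.+1)%N -> p.[1] = 1 -> l1poly p <= C ->
  enorm (caa_resmx k F x0 *m c) <= (supnorm_on rho p + alpha * k%:R * C) * r0.
Proof.
move=> [_ cmin] pk p1 pC; pose cp : 'cV[R]_k.+1 := \col_j p`_j.
have cp_l1 : l1vec cp = l1poly p.
  by rewrite (l1poly_wide pk); apply: eq_bigr => j _; rewrite mxE.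
have cp_feasible : caa_feasible C cp.
  split; last by rewrite cp_l1.
  by rewrite -p1 (horner_coef_wide _ pk); apply: eq_bigr => j _; rewrite mxE expr1n mulr1.
apply: le_trans (cmin _ cp_feasible) _; rewrite caa_resmx_mul.
have -> : \sum_(j < k.+1) cp j 0 *: r j =
    horner_mx G p *m r 0 + \sum_(j < k.+1) cp j 0 *: (r j - G ^+ j *m r 0).
  rewrite (horner_mx_wide _ pk) mulmx_suml -big_split /=; apply: eq_bigr => j _.
  by rewrite mxE -scalemxAl -scalerDr subrKC.
apply: le_trans (enormD _ _) _; rewrite mulrDl; apply: lerD.
  apply: enorm_horner_mx_le => //; first exact: supnorm_on_ge0.
  by move=> y; apply: supnorm_on_ub.
apply: le_trans (enorm_combination_le (b := k%:R * alpha * r0) _ _) _.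
  move=> j; apply: le_trans (enorm_residual_linearization j) _.
  by rewrite -!mulrA ler_wpM2r ?mulr_ge0 ?enorm_ge0 // ler_nat -ltnS.
have -> : alpha * k%:R * C * r0 = C * (k%:R * alpha * r0) by ring.
by rewrite cp_l1 ler_wpM2r // !mulr_ge0 ?enorm_ge0.
Qed.

Lemma caa_residual_le C (c : 'cV[R]_k.+1) (xe := caa_output F x0 c) :
  1 <= C -> caa_argmin F x0 C c ->
  enorm (F xe - xe) <= (rho_tilde rho k C + 3%:R * alpha * k%:R * C) * enorm (F x0 - x0).
Proof.
move=> C1 cmin; rewrite [in X in _ <= X]enormB; apply: le_inf_affine; last 1 first.
- move=> _ [p [pk p1 pC ->]]; apply: le_trans (enorm_caa_residual_le cmin.1) _.
  apply: le_trans (lerD (enorm_resmx_argmin_le cmin pk p1 pC) (lexx _)) _.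
  have -> : 3%:R * alpha * k%:R * C = alpha * k%:R * C + 2%:R * alpha * k%:R * C by ring.
  by rewrite addrA [X in _ <= X]mulrDl.
- exists (supnorm_on rho 1), 1; split => //.
  + by rewrite size_poly1.
  + by rewrite hornerC.
  + by rewrite l1polyC normr1.
- exact: enorm_ge0.
Qed.

End AndersonAcceleration.

Section Chebyshev.
Variable R : realType.
Local Notation T := (cheb R).

Lemma cheb_pairE m : cheb_pair R m = (T m, T m.+1).
Proof. by rewrite /cheb; elim: m => //= m ->. Qed.

Lemma chebSS m : T m.+2 = 'X * T m.+1 *+ 2 - T m.
Proof. by rewrite {1}/cheb /= cheb_pairE. Qed.

Lemma size_cheb m : (size (T m) <= m.+1)%N.
Proof.
elim/ltn_ind: m => -[|[|m]] IH; first by rewrite size_poly1.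
  by rewrite /cheb /= size_polyX.
have IHm := IH m (ltnW (ltnSn _)); have IHm1 := IH m.+1 (ltnSn _).
rewrite chebSS; apply: leq_trans (size_polyD _ _) _; rewrite size_polyN geq_max.
apply/andP; split; last by apply: leq_trans IHm _; lia.
rewrite mulr2n; apply: leq_trans (size_polyD _ _) _; rewrite maxnn.
by apply: leq_trans (size_polyMleq _ _) _; rewrite size_polyX; lia.
Qed.

Lemma horner_chebSS m y : (T m.+2).[y] = 2 * y * (T m.+1).[y] - (T m).[y].
Proof. by rewrite chebSS hornerD hornerN hornerMn hornerM hornerX -mulr_natl mulrA. Qed.

Lemma cheb_invariant m y :
  (T m).[y] ^+ 2 - 2 * y * (T m).[y] * (T m.+1).[y] + (T m.+1).[y] ^+ 2 = 1 - y ^+ 2.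
Proof.
elim: m => [|m IH]; first by rewrite /cheb /= hornerC hornerX; ring.
by rewrite horner_chebSS -IH; ring.
Qed.

Lemma cheb_cosh m w v : w * v = 1 -> (T m).[(w + v) / 2] = (w ^+ m + v ^+ m) / 2.
Proof.
move=> wv; suff : (T m).[(w + v) / 2] = (w ^+ m + v ^+ m) / 2 /\
    (T m.+1).[(w + v) / 2] = (w ^+ m.+1 + v ^+ m.+1) / 2 by case.
have two0 : (2 : R) != 0 by rewrite pnatr_eq0.
elim: m => [|m [IH0 IH1]]; first by rewrite /cheb /= hornerC hornerX; split; field.
split => //; rewrite horner_chebSS IH0 IH1 !exprS.
apply/eqP; rewrite -subr_eq0; apply/eqP.
transitivity ((w * v - 1) * (w ^+ m + v ^+ m) / 2); first by field.
by rewrite wv subrr !mul0r.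
Qed.

Lemma cheb_invD m b : b != 0 -> (T m).[(b^-1 + b) / 2] = ((b ^+ m)^-1 + b ^+ m) / 2.
Proof. by move=> b0; rewrite cheb_cosh ?mulVf // exprVn. Qed.

(* For y^2 < 1, cheb_invariant reads (T_{m+1} - y T_m)^2 + (1 - y^2) T_m^2 = 1 - y^2;
   for y = 1 or y = -1 take w = v = y in cheb_cosh. *)
Lemma cheb_bounded m y : -1 <= y <= 1 -> `|(T m).[y]| <= 1.
Proof.
move=> /andP[y_ge y_le]; have [y1|y1] : y ^+ 2 < 1 \/ y ^+ 2 = 1.
- have : y ^+ 2 <= 1 by nra.
  by rewrite le_eqVlt => /orP[/eqP|]; [right|left].
- have := cheb_invariant m y; set a := (T m).[y]; set b := (T m.+1).[y] => inv.
  have := sqr_ge0 (b - y * a) => sq; have a1 : a ^+ 2 <= 1 by nra.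
  by rewrite ler_norml; apply/andP; split; nra.
have -> : y = (y + y) / 2 by field.
rewrite cheb_cosh -?expr2 // (_ : _ / 2 = y ^+ m); last by field.
by rewrite normrX -[`|y|]sqrtr_sqr y1 sqrtr1 expr1n.
Qed.

End Chebyshev.

Section ChebyshevBeta.
Variable R : realType.

Let sqrt_one_sub_lt1 (r : R) : 0 < r -> Num.sqrt (1 - r) < 1.
Proof. by move=> r0; rewrite -[X in _ < X](sqrtr1 R) ltr_sqrt //; lra. Qed.

Lemma beta_of_gt0 (r : R) : 0 < r < 1 -> 0 < beta_of r.
Proof.
move=> /andP[r0 r1].
have s1 := sqrt_one_sub_lt1 r0.
by rewrite divr_gt0 ?subr_gt0 // ltr_wpDr ?sqrtr_ge0.
Qed.

Lemma rate_of_gt0 k (b : R) : 0 < b -> 0 < rate_of k b.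
Proof. by move=> b0; rewrite divr_gt0 ?mulr_gt0 ?exprn_gt0 // ltr_wpDr ?exprn_ge0 ?ltW. Qed.

(* With b = beta_of r one has 2/r - 1 = (1/b + b)/2, and T_k((1/b + b)/2) =
   (1/b^k + b^k)/2 by cheb_invD. *)
Lemma cheb_beta k (r : R) : 0 < r < 1 ->
  (cheb R k).[2 / r - 1] = (rate_of k (beta_of r))^-1.
Proof.
move=> r01; have b0 := beta_of_gt0 r01; move: r01 => /andP[r0 r1].
have s0 : 0 <= Num.sqrt (1 - r) := sqrtr_ge0 _.
have s2 : Num.sqrt (1 - r) ^+ 2 = 1 - r by rewrite sqr_sqrtr // subr_ge0 ltW.
have s1 := sqrt_one_sub_lt1 r0.
set s := Num.sqrt (1 - r) in s0 s1 s2; set b := beta_of r in b0 *.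
have bE : b = (1 - s) / (1 + s) by [].
clearbody s b.
have rE : r = 1 - s ^+ 2 by rewrite s2 subKr.
have -> : 2 / r - 1 = (b^-1 + b) / 2.
  rewrite bE rE; field; rewrite -rE; apply/and3P; split; apply/negP => /eqP; lra.
rewrite cheb_invD ?gt_eqF // /rate_of mulnC exprM.
have bk0 : 0 < b ^+ k := exprn_gt0 _ b0.
by field; rewrite !gt_eqF // ltr_wpDr ?sqr_ge0.
Qed.

End ChebyshevBeta.

Section ShiftedChebyshev.
Variable R : realType.
Variables (rho eps : R) (k : nat).
Hypotheses (rho0 : 0 < rho) (rho1 : rho < 1) (eps0 : 0 <= eps).
Local Notation rate := (rate_of k (beta_of ((rho + eps) / (1 + eps)))).

Let r01 : 0 < (rho + eps) / (1 + eps) < 1.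
Proof.
have [[r0 r1] e0] := (rho0, rho1, eps0); have eps1 : 0 < 1 + eps by lra.
by apply/andP; split; [apply: divr_gt0; lra | rewrite ltr_pdivrMr //; lra].
Qed.

Lemma size_p_eps : (size (p_eps rho k eps) <= k.+1)%N.
Proof.
apply: leq_trans (size_scale_leq _ _) _; apply: leq_trans (size_comp_poly_leq _ _) _.
set q := (_ - 1)%R; have : (size q <= 2)%N.
  apply: leq_trans (size_polyD _ _) _; rewrite size_polyN size_poly1 geq_max andbT.
  by apply: leq_trans (size_scale_leq _ _) _; rewrite size_XaddC.
by move: (size_cheb R k) => /[swap]; move: (size q) (size (cheb R k)) => a b; nia.
Qed.

Lemma horner_p_eps x :
  (p_eps rho k eps).[x] = rate * (cheb R k).[2 / (rho + eps) * (x + eps) - 1].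
Proof.
rewrite /p_eps hornerZ horner_comp !hornerE; congr (_ * _).
have -> : 2 * (1 + eps) / (rho + eps) - 1 = 2 / ((rho + eps) / (1 + eps)) - 1.
  by rewrite invf_div mulrA.
by rewrite cheb_beta // ger0_norm ?invrK // invr_ge0 ltW // rate_of_gt0 // beta_of_gt0.
Qed.

Lemma p_eps1 : (p_eps rho k eps).[1] = 1.
Proof.
rewrite horner_p_eps.
have -> : 2 / (rho + eps) * (1 + eps) - 1 = 2 / ((rho + eps) / (1 + eps)) - 1.
  by rewrite invf_div mulrA mulrAC.
by rewrite cheb_beta // mulfV // gt_eqF // rate_of_gt0 // beta_of_gt0.
Qed.

Lemma p_eps_bound x : 0 <= x <= rho -> `|(p_eps rho k eps).[x]| <= rate.
Proof.
move=> /andP[x0 xrho]; have [[r0 r1] e0] := (rho0, rho1, eps0).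
have rate0 : 0 < rate by rewrite rate_of_gt0 // beta_of_gt0.
rewrite horner_p_eps normrM (ger0_norm (ltW rate0)); apply: ler_piMr; first exact: ltW.
apply: cheb_bounded; have re0 : 0 < rho + eps by lra.
have -> : 2 / (rho + eps) * (x + eps) = 2 * ((x + eps) / (rho + eps)) by rewrite mulrAC mulrA.
have u0 : 0 <= (x + eps) / (rho + eps) by rewrite divr_ge0 //; lra.
have u1 : (x + eps) / (rho + eps) <= 1 by rewrite ler_pdivrMr //; lra.
by apply/andP; split; lra.
Qed.

End ShiftedChebyshev.

Section Achievable.
Variable R : realType.
Implicit Types (rho C r : R) (k : nat).

Definition achievable rho k C r := exists p : {poly R},
  [/\ (size p <= k.+1)%N, p.[1] = 1, l1poly p <= C &
      forall x, 0 <= x <= rho -> `|p.[x]| <= r].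

Lemma achievable_le rho k C C' r : C <= C' -> achievable rho k C r -> achievable rho k C' r.
Proof. by move=> CC' [p [pk p1 pC pr]]; exists p; split=> //; apply: le_trans CC'. Qed.

Lemma achievable_convex rho k C1 C2 r1 r2 t : 0 <= t <= 1 ->
  achievable rho k C1 r1 -> achievable rho k C2 r2 ->
  achievable rho k ((1 - t) * C1 + t * C2) ((1 - t) * r1 + t * r2).
Proof.
move=> /andP[t0 t1] [p [pk p1 pC pr]] [q [qk q1 qC qr]].
have t0' : 0 <= 1 - t by rewrite subr_ge0.
exists ((1 - t) *: p + t *: q); split.
- apply: leq_trans (size_polyD _ _) _; rewrite geq_max.
  by rewrite (leq_trans (size_scale_leq _ _) pk) (leq_trans (size_scale_leq _ _) qk).
- by rewrite hornerD !hornerZ p1 q1 !mulr1 subrK.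
- apply: le_trans (l1polyD _ _) _; rewrite !l1polyZ !ger0_norm //.
  by apply: lerD; apply: ler_wpM2l.
- move=> x xrho; rewrite hornerD !hornerZ; apply: le_trans (ler_normD _ _) _.
  rewrite !normrM (ger0_norm t0') (ger0_norm t0).
  by apply: lerD; apply: ler_wpM2l; [|exact: pr|done|exact: qr].
Qed.

Lemma rho_tilde_le rho k C r : 0 <= rho <= 1 -> achievable rho k C r -> rho_tilde rho k C <= r.
Proof.
move=> /andP[rho0 rho1] [p [pk p1 pC pr]].
apply: le_trans (supnorm_on_le rho0 pr); apply: ge_inf; last by exists p.
by exists 0 => _ [q [_ _ _ ->]]; apply: supnorm_on_ge0.
Qed.

Lemma bracket_index (f : nat -> R) C N : f 0%N <= C ->
  f N <= C \/ exists2 j, (j < N)%N & f j <= C < f j.+1.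
Proof.
move=> f0; elim: N => [|N [fN|[j jN fj]]]; first by left.
- by have [fN1|fN1] := leP (f N.+1) C; [left|right; exists N => //; rewrite fN].
- by right; exists j => //; apply: ltnW.
Qed.

Section Nodes.
Variables (rho : R) (k M : nat).
Hypotheses (rho0 : 0 < rho) (rho1 : rho < 1).

Lemma achievable_Xn : achievable rho k 1 (rho ^+ k).
Proof.
exists 'X^k; split; first by rewrite size_polyXn.
- by rewrite hornerXn expr1n.
- by rewrite l1polyXn.
move=> x /andP[x0 xrho]; rewrite hornerXn normrX ger0_norm //.
by rewrite lerXn2r // ?nnegrE // ltW.
Qed.

Lemma achievable_shifted_Xn :
  achievable rho k ((2 + rho ^+ k) / (2 - rho ^+ k)) (rho ^+ k / (2 - rho ^+ k)).
Proof.
have rk0 : 0 <= rho ^+ k by rewrite exprn_ge0 // ltW.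
have rk1 : rho ^+ k <= 1 by rewrite exprn_ile1 // ltW.
have d0 : 0 < (2 - rho ^+ k)^-1 by rewrite invr_gt0; lra.
exists ((2 - rho ^+ k)^-1 *: (2 *: 'X^k - (rho ^+ k)%:P)); split.
- apply: leq_trans (size_scale_leq _ _) _; apply: leq_trans (size_polyD _ _) _.
  rewrite geq_max size_polyN size_polyC (leq_trans (size_scale_leq _ _)) ?size_polyXn //.
  by case: (_ != 0).
- rewrite hornerZ !hornerE expr1n mulr1 mulVf //; apply/negP => /eqP; lra.
- rewrite l1polyZ (ger0_norm (ltW d0)) mulrC ler_pM2r //.
  apply: le_trans (l1polyD _ _) _; rewrite -scaleN1r !l1polyZ l1polyC l1polyXn.
  by rewrite normrN1 mul1r mulr1 !ger0_norm.
- move=> x /andP[x0 xrho]; rewrite hornerZ !hornerE normrM (ger0_norm (ltW d0)).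
  rewrite mulrC ler_pM2r // ler_norml.
  have : x ^+ k <= rho ^+ k by rewrite lerXn2r ?nnegrE // ltW.
  have : 0 <= x ^+ k by rewrite exprn_ge0.
  by move=> *; apply/andP; split; lra.
Qed.

Lemma achievable_p_eps eps : 0 <= eps ->
  achievable rho k (l1poly (p_eps rho k eps)) (rate_of k (beta_of ((rho + eps) / (1 + eps)))).
Proof.
move=> eps0; exists (p_eps rho k eps); split => //.
- exact: size_p_eps.
- exact: p_eps1.
- exact: p_eps_bound.
Qed.

Lemma achievable_nodes j : achievable rho k (Cs rho k M j) (rhos rho k M j).
Proof.
rewrite /Cs /rhos; case: j => [|[|j]] /=; [exact: achievable_Xn|exact: achievable_shifted_Xn|].
case: ifP => _; first by apply: achievable_p_eps; rewrite divr_ge0 ?exprn_ge0 ?ltW.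
by have := achievable_p_eps (lexx 0); rewrite !addr0 divr1.
Qed.

Lemma rho_tilde_le_interp_bound C : 1 <= C -> rho_tilde rho k C <= interp_bound rho k M C.
Proof.
have rho01 : 0 <= rho <= 1 by rewrite !ltW.
move=> C1; have [CM|[j jM /andP[Cj Cj1]]] := bracket_index (f := Cs rho k M) M.+2 C1.
  apply: le_trans (rho_tilde_le rho01 (achievable_le CM (achievable_nodes M.+2))) _.
  by rewrite /rhos /= ltnn; apply: bigmax_ge_id.
set f := Cs rho k M in Cj Cj1 *; set g := rhos rho k M.
have df : 0 < f j.+1 - f j by rewrite subr_gt0 (le_lt_trans Cj).
set t := (C - f j) / (f j.+1 - f j).
have t01 : 0 <= t <= 1.
  rewrite /t ler_pdivrMr // mul1r lerD2r (ltW Cj1) andbT.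
  by apply: divr_ge0; [rewrite subr_ge0 | exact: ltW].
have := achievable_convex t01 (achievable_nodes j) (achievable_nodes j.+1).
have -> : (1 - t) * f j + t * f j.+1 = C by rewrite /t; field; rewrite gt_eqF.
move=> /(rho_tilde_le rho01) /le_trans; apply.
have -> : (1 - t) * g j + t * g j.+1 = interp rho k M j C.
  by rewrite /interp -/f -/g /t; field; rewrite gt_eqF.
pose piece (i : 'I_M.+2) := Num.max (interp rho k M i C) (rho_star rho k).
by apply: le_trans (le_bigmax _ piece (Ordinal jM)); rewrite le_max lexx.
Qed.

End Nodes.
End Achievable.

Theorem proposition6 (R : realType) (n : nat) (rho alpha : R)
  (F : 'cV[R]_n -> 'cV[R]_n) (G : 'M[R]_n) (xi : 'cV[R]_n -> 'cV[R]_n)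
  (C : R) (k : nat) (x0 : 'cV[R]_n) (c : 'cV[R]_k.+1) :
  (0 < n)%N -> 0 < rho < 1 -> 0 <= alpha ->
  lipschitz rho F ->
  (forall x, F x = G *m x + xi x) ->
  symmetric_mx G -> psd G -> loewner_le G (rho%:M) ->
  lipschitz alpha xi ->
  1 <= C -> (2 < k)%N ->
  caa_argmin F x0 C c ->
  let xe := caa_output F x0 c in
  let rho_hat := rho_tilde rho k C + 3%:R * alpha * k%:R * C in
  enorm (F xe - xe) <= rho_hat * enorm (F x0 - x0) /\
  (forall M : nat, (0 < M)%N ->
     rho_hat <= interp_bound rho k M C + 3%:R * alpha * k%:R * C).
Proof.
case: n F G xi x0 => // n F G xi x0 _ /andP[rho0 rho1] alpha0 FL FG Gsym Gpsd Grho xiL.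
move=> C1 _ cmin xe rho_hat; split.
  exact: (caa_residual_le (ltW rho0) (ltW rho1) alpha0 FL xiL FG Gsym Gpsd Grho C1 cmin).
by move=> M _; rewrite lerD2r rho_tilde_le_interp_bound.
Qed.
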